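(* Let $X$ be a non-compact locally compact Hausdorff space. Then the set $\mathrm{AppInv}(C_0(X))$ of approximately invertible elements of $C_0(X)$ has empty interior in $C_0(X)$ (with respect to the sup norm).
   Context: $C_0(X)$ is the algebra of continuous complex functions on $X$ vanishing at infinity, with pointwise operations and the sup norm. An approximate identity in $C_0(X)$ is a net $(e_j)$ with $\|e_jh-h\|_\infty\to 0$ for every $h\in C_0(X)$. An element $f\in C_0(X)$ is approximately invertible if there is a net $(g_j)$ in $C_0(X)$ such that $(fg_j)$ is an approximate identity in $C_0(X)$. *)

From HB Require Import structures.
From mathcomp Require Import all_boot all_order all_algebra.
From mathcomp Require Import all_classical all_reals all_analysis.
From mathcomp Require Import complex.
Set Implicit Arguments. Unset Strict Implicit. Unset Printing Implicit Defensive.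
Import Order.TTheory GRing.Theory Num.Theory ComplexField.
Local Open Scope classical_set_scope.
Local Open Scope ring_scope.
Local Open Scope complex_scope.

Definition cmod (R : realType) (z : R[i]) : R := ComplexField.Normc.normc z.

Section C0.
Variables (R : realType) (X : topologicalType).

Definition ccontinuous (f : X -> R[i]) : Prop :=
  forall (x : X) (e : R), 0 < e -> \forall y \near x, cmod (f y - f x) < e.

Definition vanishes_at_infinity (f : X -> R[i]) : Prop :=
  forall e : R, 0 < e ->
    exists K : set X, compact K /\ forall x, ~ K x -> cmod (f x) < e.

Definition C0 (f : X -> R[i]) : Prop :=
  ccontinuous f /\ vanishes_at_infinity f.

Definition supnorm (f : X -> R[i]) : R :=
  sup [set cmod (f x) | x in [set: X]].

Definition directed (J : Type) (le : J -> J -> Prop) : Prop :=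
  (exists j : J, True) /\
  (forall j, le j j) /\
  (forall i j k, le i j -> le j k -> le i k) /\
  (forall i j, exists k, le i k /\ le j k).

Definition approx_identity (J : Type) (le : J -> J -> Prop)
    (e : J -> X -> R[i]) : Prop :=
  directed le /\ (forall j, C0 (e j)) /\
  forall h : X -> R[i], C0 h ->
    forall eps : R, 0 < eps -> exists j0, forall j, le j0 j ->
      supnorm (fun x => e j x * h x - h x) < eps.

Definition approx_invertible (f : X -> R[i]) : Prop :=
  C0 f /\
  exists (J : Type) (le : J -> J -> Prop) (g : J -> X -> R[i]),
    (forall j, C0 (g j)) /\ approx_identity le (fun j x => f x * g j x).

End C0.

From HB Require Import structures.
From mathcomp Require Import all_boot all_order all_algebra.
From mathcomp Require Import all_classical all_reals all_analysis.
From mathcomp Require Import complex.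
From mathcomp Require Import ring lra.
Import Order.TTheory GRing.Theory Num.Theory ComplexField.
Local Open Scope classical_set_scope.
Local Open Scope ring_scope.
Local Open Scope complex_scope.

(* Approximately invertible elements of C_0(X) vanish nowhere:
   if (g g_j) is an approximate identity and h is a bump function with
   h x0 = 1, then |g x0 g_j x0 - 1| <= ||g g_j h - h|| < 1 for large j, so
   g x0 <> 0.  Now let f be approximately invertible and r > 0.  Since X is
   not compact and f vanishes at infinity, some x0 has |f x0| < r.  With a
   bump h at x0 (|h| <= 1, h x0 = 1, built by Urysohn's lemma in the
   one-point compactification), g := f - f x0 * h lies in C_0(X), is within
   sup-distance |f x0| < r of f, and vanishes at x0; hence g is not
   approximately invertible and no ball around f lies in AppInv(C_0(X)). *)

Section Modulus.
Context {R : realType}.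
Implicit Types a b : R[i].

Lemma cmod_ge0 a : 0 <= cmod a.
Proof. by case: a => x y; rewrite /cmod /= sqrtr_ge0. Qed.

Lemma cmodD a b : cmod (a + b) <= cmod a + cmod b.
Proof. exact: (@le_normcD R a b). Qed.

Lemma cmodN a : cmod (- a) = cmod a.
Proof. exact: (@normcN R a). Qed.

Lemma cmodM a b : cmod (a * b) = cmod a * cmod b.
Proof. exact: (@Normc.normcM R a b). Qed.

Lemma cmod1 : cmod (1 : R[i]) = 1.
Proof. exact: (@Normc.normc1 R). Qed.

Lemma cmod_real (x : R) : cmod (x%:C) = `|x|.
Proof. by rewrite /cmod /= expr0n /= addr0 sqrtr_sqr. Qed.

Lemma cmod_dist a b : `|cmod a - cmod b| <= cmod (a - b).
Proof.
rewrite ler_norml; apply/andP; split.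
  have := cmodD (b - a) a; rewrite subrK -[b - a]opprB cmodN; lra.
have := cmodD (a - b) b; rewrite subrK; lra.
Qed.

Lemma small_sub_scale (c : R[i]) (e : R) : 0 < e ->
  exists2 d : R, 0 < d &
    forall a b, cmod a < e / 2 -> cmod b < d -> cmod (a - c * b) < e.
Proof.
move=> e0; have c0 := cmod_ge0 c.
have c1 : 0 < cmod c + 1 by rewrite ltr_pwDr.
exists (e / 2 / (cmod c + 1)); first by rewrite !divr_gt0.
move=> a b ha hb; apply: le_lt_trans (cmodD _ _) _; rewrite cmodN cmodM.
have cd : (cmod c + 1) * (e / 2 / (cmod c + 1)) = e / 2.
  by field; rewrite gt_eqF.
have := cmod_ge0 b; nra.
Qed.
End Modulus.

Section C0Space.
Context {R : realType} {X : topologicalType}.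
Implicit Types F H : X -> R[i].

(* Elements of C_0(X) are bounded: continuous on a compact set, and small
   outside of it. *)
Lemma C0_bounded F : C0 F -> exists M : R, forall x, cmod (F x) <= M.
Proof.
move=> [cF vF]; have [K [cK HK]] := vF 1 ltr01.
pose phi := fun x => cmod (F x) : R.
have cphi : continuous (phi : X -> R^o).
  move=> x; apply/cvgrPdist_lt => e e0.
  apply: filterS (cF x e e0) => y Hy; rewrite distrC.
  exact: le_lt_trans (cmod_dist (F y) (F x)) Hy.
have [M [_ HM]] :=
  compact_bounded (continuous_compact (continuous_subspaceT cphi) cK).
have /= HM1 := HM (M + 1) ltac:(by rewrite ltrDl).
exists (Num.max (M + 1) 1) => x.
have [Kx|nKx] := pselect (K x).
  have : `|phi x| <= M + 1 by apply: HM1; exists x.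
  by rewrite /phi ger0_norm ?cmod_ge0 // => h; rewrite le_max h.
by rewrite le_max (ltW (HK x nKx)) orbT.
Qed.

Lemma cmod_le_supnorm F : (exists M, forall x, cmod (F x) <= M) ->
  forall x, cmod (F x) <= supnorm F.
Proof.
move=> [M HM] x; apply: sup_upper_bound; last by exists x.
split; first by exists (cmod (F x)), x.
by exists M => _ [y _ <-]; exact: HM.
Qed.

(* A pointwise bound is a bound on the sup norm (X being inhabited). *)
Lemma supnorm_le F b (x0 : X) : (forall x, cmod (F x) <= b) -> supnorm F <= b.
Proof.
move=> H; apply: ge_sup; first by exists (cmod (F x0)), x0.
by move=> _ [y _ <-]; exact: H.
Qed.

Lemma vanishing_small_value F e : ~ compact [set: X] ->
  vanishes_at_infinity F -> 0 < e -> exists x, cmod (F x) < e.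
Proof.
move=> ncX vF e0; have [K [cK HK]] := vF e e0.
apply: contrapT => Hn; apply: ncX.
suff -> : [set: X] = K by [].
apply/seteqP; split=> // x _; apply: contrapT => nK.
by apply: Hn; exists x; exact: HK.
Qed.

Lemma C0_sub_scale F H (c : R[i]) : C0 F -> C0 H -> C0 (fun x => F x - c * H x).
Proof.
move=> [cF vF] [cH vH]; split.
  move=> x e e0; have [d d0 small] := small_sub_scale c _ e0.
  have e2 : 0 < e / 2 by rewrite divr_gt0.
  apply: filterS2 (cF x _ e2) (cH x _ d0) => y hF hH.
  rewrite (_ : _ - _ = (F y - F x) - c * (H y - H x)); last by ring.
  exact: small.
move=> e e0; have [d d0 small] := small_sub_scale c _ e0.
have e2 : 0 < e / 2 by rewrite divr_gt0.
have [K1 [cK1 HK1]] := vF _ e2.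
have [K2 [cK2 HK2]] := vH _ d0.
exists (K1 `|` K2); split; first exact: compactU.
by move=> x nK; apply: small; [apply: HK1 | apply: HK2] => ?; apply: nK;
  [left | right].
Qed.

Lemma supnorm_sub_scale_le F H (c : R[i]) (x0 : X) :
  (forall x, cmod (H x) <= 1) ->
  supnorm (fun x => (F x - c * H x) - F x) <= cmod c.
Proof.
move=> Hb; apply: (supnorm_le _ _ x0) => x.
rewrite (_ : _ - _ = - (c * H x)); last by ring.
by rewrite cmodN cmodM -[leRHS]mulr1 ler_wpM2l ?cmod_ge0.
Qed.
End C0Space.

Section Bump.
Context {R : realType} {X : topologicalType}.
Hypothesis hX : hausdorff_space X.
Hypothesis lcX : locally_compact [set: X].

(* Bump functions: Urysohn's lemma in the one-point compactification
   separates the point at infinity from x0; restricting to X gives an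
   element of C_0(X) with values in [0, 1] and value 1 at x0. *)
Lemma bump (x0 : X) : exists h : X -> R[i],
  C0 h /\ h x0 = 1 /\ forall x, cmod (h x) <= 1.
Proof.
have crs := @one_point_compactification_completely_reg X R lcX hX.
have hopc := one_point_compactification_hausdorff lcX hX.
pose A := [set (None : one_point_compactification X)].
pose B := [set (Some x0 : one_point_compactification X)].
have clB : closed B by exact: accessible_closed_set1 (hausdorff_accessible hopc) _.
have sep := crs None _ clB (fun h => ltac:(by [])).
pose u := @Urysohn _ R A B.
have u0 : u None = 0 by apply: (Urysohn_sub0 sep); exists None.
have u1 : u (Some x0) = 1 by apply: (Urysohn_sub1 sep); exists (Some x0).
have ur z : 0 <= u z <= 1.
  by have := @Urysohn_range _ R A B (u z) (ex_intro2 _ _ z I erefl);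
    rewrite /= in_itv.
have uc : continuous (u : _ -> R^o) := @Urysohn_continuous _ R _ _.
exists (fun x => (u (Some x))%:C); split; last split.
- split.
    move=> x e e0.
    have /cvgrPdist_lt /(_ e e0) Hn := uc (Some x).
    have Hn2 : \forall y \near x, `|u (Some x) - u (Some y)| < e := Hn.
    apply: filterS Hn2 => y Hy.
    by rewrite -rmorphB cmod_real distrC.
  move=> e e0.
  have /cvgrPdist_lt /(_ e e0) [U [cU _] HU] := uc None.
  exists U; split => // x nU.
  have := HU (Some x) (or_introl (ex_intro2 _ _ x nU erefl)).
  by rewrite cmod_real u0 sub0r normrN.
- by rewrite u1.
- by move=> x; rewrite cmod_real ger0_norm; have /andP[] := ur (Some x).
Qed.

(* Some member of an approximate identity is at distance < 1 from 1 at x0: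
   test it against a bump function at x0. *)
Lemma approx_identity_near_one (J : Type) (le : J -> J -> Prop)
    (e : J -> X -> R[i]) (x0 : X) :
  approx_identity le e -> exists j, cmod (e j x0 - 1) < 1.
Proof.
move=> [[_ [lerefl _]] [Ce AI]].
have [h [Ch [h1 hb]]] := bump x0.
have [j0 Hj0] := AI h Ch 1 ltr01.
exists j0; have [M HM] := C0_bounded _ (Ce j0).
have bounded : exists M, forall x, cmod (e j0 x * h x - h x) <= M.
  exists (M + 1) => x; apply: le_trans (cmodD _ _) _; rewrite cmodN cmodM.
  apply: lerD (hb x); rewrite -[leRHS]mulr1.
  by apply: ler_pM; rewrite ?cmod_ge0.
have := cmod_le_supnorm _ bounded x0; rewrite h1 mulr1.
by move/le_lt_trans; apply; exact: Hj0 j0 (lerefl j0).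
Qed.

Lemma approx_invertible_nonvanishing (g : X -> R[i]) (x0 : X) :
  approx_invertible g -> g x0 <> 0.
Proof.
move=> [_ [J [le [gj [_ AI]]]]] g0.
have [j] := approx_identity_near_one _ _ _ x0 AI.
by rewrite /= g0 mul0r sub0r cmodN cmod1 ltxx.
Qed.
End Bump.

Theorem proposition3p10 (R : realType) (X : topologicalType)
  (hX : hausdorff_space X) (lcX : locally_compact [set: X])
  (ncX : ~ compact [set: X]) :
  ~ exists (f : X -> R[i]) (r : R),
      approx_invertible f /\ 0 < r /\
      forall g : X -> R[i], C0 g ->
        supnorm (fun x => g x - f x) < r -> approx_invertible g.
Proof.
move=> [f [r [[Cf _] [r0 ball_in_AppInv]]]].
have [x0 small_fx0] := vanishing_small_value _ _ ncX Cf.2 r0.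
have [h [Ch [h1 hb]]] := bump (R := R) hX lcX x0.
pose g x := f x - f x0 * h x.
have Ag : approx_invertible g.
  apply: ball_in_AppInv; first exact: C0_sub_scale.
  exact: le_lt_trans (supnorm_sub_scale_le _ _ _ x0 hb) small_fx0.
have g_x0 : g x0 = 0 by rewrite /g h1 mulr1 subrr.
exact: approx_invertible_nonvanishing hX lcX _ x0 Ag g_x0.
Qed.
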